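(* Let $(N_1,m_1)$ and $(N_2,m_2)$ be labeled marked Petri nets and $E$ a system of linear constraints such that $(N_1,m_1)\vartriangleright_E(N_2,m_2)$. Then for every $m_1'\in R(N_1,m_1)$ there is $m_2'\in R(N_2,m_2)$ such that $m_1'\uplus m_2'\models E$.
   Context: A Petri net $N=(P,T,\mathrm{Pre},\mathrm{Post})$ has a finite set of places $P$, a finite set of transitions $T$ disjoint from $P$, and flow functions $\mathrm{Pre},\mathrm{Post}:T\to(P\to\mathbb N)$. A marking is a map $m:P\to\mathbb N$. Transition $t$ is enabled at $m$ if $m(p)\ge\mathrm{Pre}(t,p)$ for all $p$; firing it yields $m'=m-\mathrm{Pre}(t)+\mathrm{Post}(t)$. A firing sequence $\varrho$ leads from $m$ to $m'$ ($m\overset{\varrho}{\Rightarrow}m'$) if its transitions can be fired successively from $m$ reaching $m'$; $R(N,m_0)$ is the set of markings reachable from $m_0$. A labeled net has a labeling $l:T\to\Sigma\cup\{\tau\}$ ($\tau\notin\Sigma$ silent), extended to sequences by $l(\epsilon)=\epsilon$, $\tau$ mapped to $\epsilon$, $l(\varrho t)=l(\varrho)l(t)$. Formulas are Boolean combinations of linear (in)equalities over integer variables; place names are used as variables. For a marking $m$ over $P$, $\underline m\triangleq\bigwedge_{p\in P}(p=m(p))$; $m\models\phi$ means $\phi\wedge\underline m$ is satisfiable over the integers. Markings $m_1$ over $P_1$, $m_2$ over $P_2$ are compatible if they agree on $P_1\cap P_2$; then $m_1\uplus m_2$ is the marking on $P_1\cup P_2$ agreeing with both; $m_1\uplus m_2\models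 E$ presupposes compatibility. $E$-abstraction (for $N_1,N_2$ with labelings $l_1,l_2$ over the same alphabet): $(N_1,m_1)\sqsupseteq_E(N_2,m_2)$ iff (A1) $m_1\uplus m_2\models E$; and (A2) for every firing sequence $m_1\overset{\varrho_1}{\Rightarrow}m_1'$ in $N_1$ there is at least one marking $m_2'$ over $P_2$ with $m_1'\uplus m_2'\models E$, and for every marking $m_2'$ over $P_2$ with $m_1'\uplus m_2'\models E$ there is a firing sequence $\varrho_2$ of $N_2$ with $m_2\overset{\varrho_2}{\Rightarrow}m_2'$ and $l_1(\varrho_1)=l_2(\varrho_2)$. $(N_1,m_1)\vartriangleright_E(N_2,m_2)$ means both directions hold. *)

From mathcomp Require Import all_boot all_algebra.
Set Implicit Arguments. Unset Strict Implicit. Unset Printing Implicit Defensive.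
Import GRing.Theory Num.Theory.
Local Open Scope ring_scope.

Record linexp (V : Type) := LinExp { lcoefs : seq (int * V); lconst : int }.

Inductive formula (V : Type) :=
| FTrue
| FLe  of linexp V & linexp V
| FEq  of linexp V & linexp V
| FNot of formula V
| FAnd of formula V & formula V
| FOr  of formula V & formula V.

Definition eval_lin (V : Type) (v : V -> int) (e : linexp V) : int :=
  \sum_(c <- lcoefs e) c.1 * v c.2 + lconst e.

Fixpoint holds (V : Type) (v : V -> int) (f : formula V) : Prop :=
  match f with
  | FTrue => True
  | FLe e1 e2 => eval_lin v e1 <= eval_lin v e2
  | FEq e1 e2 => eval_lin v e1 = eval_lin v e2
  | FNot g => ~ holds v g
  | FAnd g h => holds v g /\ holds v h
  | FOr g h => holds v g \/ holds v h
  end.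

(* Places are a finite list of names; transitions a finite type; labels
   [None] stand for the silent label tau. Flow functions vanish outside P. *)
Record pnet (Pl : eqType) (Sig : Type) := PNet {
  places : seq Pl;
  trans : finType;
  pre : trans -> Pl -> nat;
  post : trans -> Pl -> nat;
  lab : trans -> option Sig;
  pre_supp : forall t p, p \notin places -> pre t p = 0%N;
  post_supp : forall t p, p \notin places -> post t p = 0%N
}.

Section Nets.
Variables (Pl : eqType) (Sig : Type).

Definition marking_over (P : seq Pl) (m : Pl -> nat) : Prop :=
  forall p, p \notin P -> m p = 0%N.

Definition enabled (N : pnet Pl Sig) (m : Pl -> nat) (t : trans N) : Prop :=
  forall p, (pre t p <= m p)%N.

Definition fire (N : pnet Pl Sig) (m : Pl -> nat) (t : trans N) : Pl -> nat :=
  fun p => (m p - pre t p + post t p)%N.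

Inductive fires (N : pnet Pl Sig) : (Pl -> nat) -> seq (trans N) -> (Pl -> nat) -> Prop :=
| fires_nil m : fires m [::] m
| fires_cons m t s m' : enabled m t -> fires (fire m t) s m' -> fires m (t :: s) m'.
Arguments fires : clear implicits.

Definition reachable (N : pnet Pl Sig) (m m' : Pl -> nat) : Prop :=
  exists s, fires N m s m'.

Definition word (N : pnet Pl Sig) (s : seq (trans N)) : seq Sig := pmap (@lab _ _ N) s.

Definition models (P : seq Pl) (m : Pl -> nat) (phi : formula Pl) : Prop :=
  exists v : Pl -> int, (forall p, p \in P -> v p = (m p)%:Z) /\ holds v phi.

Definition compatible (P1 P2 : seq Pl) (m1 m2 : Pl -> nat) : Prop :=
  forall p, p \in P1 -> p \in P2 -> m1 p = m2 p.

Definition munion (P1 : seq Pl) (m1 m2 : Pl -> nat) : Pl -> nat :=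
  fun p => if p \in P1 then m1 p else m2 p.

(* m1 (+) m2 |= E, presupposing compatibility *)
Definition union_models (P1 P2 : seq Pl) (m1 m2 : Pl -> nat) (E : formula Pl) : Prop :=
  compatible P1 P2 m1 m2 /\ models (P1 ++ P2) (munion P1 m1 m2) E.

Definition abstracts (N1 : pnet Pl Sig) (m1 : Pl -> nat) (N2 : pnet Pl Sig) (m2 : Pl -> nat)
    (E : formula Pl) : Prop :=
  union_models (places N1) (places N2) m1 m2 E /\
  forall (s1 : seq (trans N1)) (m1' : Pl -> nat), fires N1 m1 s1 m1' ->
    (exists m2', marking_over (places N2) m2' /\ union_models (places N1) (places N2) m1' m2' E) /\
    (forall m2', marking_over (places N2) m2' -> union_models (places N1) (places N2) m1' m2' E ->
       exists s2 : seq (trans N2), fires N2 m2 s2 m2' /\ word s1 = word s2).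

Definition biabstracts (N1 : pnet Pl Sig) (m1 : Pl -> nat) (N2 : pnet Pl Sig) (m2 : Pl -> nat)
    (E : formula Pl) : Prop :=
  abstracts N1 m1 N2 m2 E /\ abstracts N2 m2 N1 m1 E.

End Nets.

From mathcomp Require Import all_boot all_algebra.

Lemma abstracts_reachable (Pl : eqType) (Sig : Type) (N1 N2 : pnet Pl Sig)
    (m1 m2 : Pl -> nat) (E : formula Pl) :
  abstracts N1 m1 N2 m2 E ->
  forall m1', reachable N1 m1 m1' ->
  exists m2', reachable N2 m2 m2' /\ union_models (places N1) (places N2) m1' m2' E.
Proof.
move=> [_ simulate] m1' [s1 fire_s1].
have [[m2' [m2'_over m2'_models]] realize] := simulate s1 m1' fire_s1.
have [s2 [fire_s2 _]] := realize m2' m2'_over m2'_models.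
by exists m2'; split=> //; exists s2.
Qed.

Theorem lemma1 (Pl : eqType) (Sig : Type) (N1 N2 : pnet Pl Sig) (m1 m2 : Pl -> nat)
    (E : formula Pl) :
  marking_over (places N1) m1 -> marking_over (places N2) m2 ->
  biabstracts N1 m1 N2 m2 E ->
  forall m1', reachable N1 m1 m1' ->
  exists m2', reachable N2 m2 m2' /\ union_models (places N1) (places N2) m1' m2' E.
Proof. by move=> _ _ [forward _]; exact: abstracts_reachable. Qed.
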